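(* Let $B$ be an $n\times n$ random matrix whose entries are independent Bernoulli random variables with mean $p\in[0,1]$, and let $\varepsilon\in(0,1/2]$. Then with probability at least $1-\exp(-\varepsilon n/2)$, the total number of ones contained in those rows of $B$ that have more than $21pn+2\ln(\varepsilon^{-1})$ ones is at most $\varepsilon n$. *)

From mathcomp Require Import all_boot.
From Stdlib Require Import Reals.
Set Implicit Arguments. Unset Strict Implicit. Unset Printing Implicit Defensive.

Definition bmat (n : nat) := {ffun 'I_n * 'I_n -> bool}.

Definition bern_weight (n : nat) (p : R) (B : bmat n) : R :=
  \big[Rmult/R1]_(ij : 'I_n * 'I_n) (if B ij then p else (R1 - p)%R).

Definition bern_prob (n : nat) (p : R) (E : pred (bmat n)) : R :=
  \big[Rplus/R0]_(B : bmat n | E B) bern_weight p B.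

Definition row_ones (n : nat) (B : bmat n) (i : 'I_n) : nat :=
  (\sum_(j < n) nat_of_bool (B (i, j)))%N.

Definition heavy_row (n : nat) (p eps : R) (B : bmat n) (i : 'I_n) : bool :=
  if Rlt_dec (21 * p * INR n + 2 * ln (/ eps))%R (INR (row_ones B i))
  then true else false.

Definition heavy_ones (n : nat) (p eps : R) (B : bmat n) : nat :=
  (\sum_(i < n | heavy_row p eps B i) row_ones B i)%N.

Definition good_event (n : nat) (p eps : R) : pred (bmat n) :=
  fun B => if Rle_dec (INR (heavy_ones p eps B)) (eps * INR n)%R
           then true else false.

From mathcomp Require Import all_boot.
From Stdlib Require Import Reals Lra.
From mathcomp Require Import Rstruct.

(** Exponential-moment union bound over the possible sets of heavy rows.  For
    a set S of rows put W_S = exp(2 (ones in S) - |S| T - eps n), where T is the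
    heaviness threshold.  If the heavy rows carry more than eps n ones, then
    W_S >= 1 for S = the set of heavy rows, since each heavy row with r > T ones
    contributes exp(2r - T) >= exp r.  By independence of the entries,
    E[W_S] = exp(-eps n) a^|S| with a = exp(-T) (p e^2 + 1 - p)^n <= eps^2, and
    summing over all S gives exp(-eps n) (1 + a)^n <= exp(-eps n / 2). *)

Local Open Scope R_scope.

Lemma RmultCA (x y z : R) : x * (y * z) = y * (x * z).
Proof. ring. Qed.

Lemma exp_le_exp (x y : R) : x <= y -> exp x <= exp y.
Proof.
by case/Rle_lt_or_eq_dec => [/exp_increasing/Rlt_le | ->]; last exact: Rle_refl.
Qed.

Lemma one_add_pow_le_exp (a : R) (n : nat) : -1 <= a -> (1 + a) ^ n <= exp (a * INR n).
Proof.
move=> a_ge; elim: n => [|n IHn]; first by rewrite /= Rmult_0_r exp_0; lra.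
rewrite S_INR /= Rmult_plus_distr_l Rmult_1_r exp_plus Rmult_comm.
apply: Rmult_le_compat => //; first by apply: pow_le; lra.
all: have := exp_ineq1_le a; lra.
Qed.

Section RealBigops.

Variable I : finType.
Implicit Types (P : pred I) (F G : I -> R).

Lemma sumR_ge0 P F : (forall i, P i -> 0 <= F i) -> 0 <= \big[Rplus/R0]_(i | P i) F i.
Proof. by move=> F_ge0; apply: big_ind => //; [lra | move=> *; lra]. Qed.

Lemma sumR_le P F G : (forall i, P i -> F i <= G i) ->
  \big[Rplus/R0]_(i | P i) F i <= \big[Rplus/R0]_(i | P i) G i.
Proof. by move=> FG; apply: (big_ind2 Rle) => //; [lra | move=> *; lra]. Qed.

Lemma prodR_ge0 P F : (forall i, P i -> 0 <= F i) -> 0 <= \big[Rmult/R1]_(i | P i) F i.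
Proof. by move=> F_ge0; apply: big_ind => //; [lra | move=> *; nra]. Qed.

Lemma prodR_le P F G : (forall i, P i -> 0 <= F i <= G i) ->
  \big[Rmult/R1]_(i | P i) F i <= \big[Rmult/R1]_(i | P i) G i.
Proof.
move=> FG.
suff [] : 0 <= \big[Rmult/R1]_(i | P i) F i <= \big[Rmult/R1]_(i | P i) G i by [].
by apply: (big_ind2 (fun x y => 0 <= x <= y)) => //; [lra | move=> *; nra].
Qed.

Lemma exp_sumR P F :
  exp (\big[Rplus/R0]_(i | P i) F i) = \big[Rmult/R1]_(i | P i) exp (F i).
Proof. exact: (big_morph exp exp_plus exp_0). Qed.

Lemma INR_sumn P (F : I -> nat) :
  INR (\sum_(i | P i) F i)%N = \big[Rplus/R0]_(i | P i) INR (F i).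
Proof. exact: (big_morph INR plus_INR). Qed.

Lemma sum_ffun_prodR (F : I -> bool -> R) :
  \big[Rplus/R0]_(f : {ffun I -> bool}) \big[Rmult/R1]_i F i (f i)
  = \big[Rmult/R1]_i (F i true + F i false).
Proof. by rewrite -bigA_distr_bigA; apply: eq_bigr => i _; rewrite big_bool. Qed.

End RealBigops.

Lemma prodR_const_ord (n : nat) (x : R) : \big[Rmult/R1]_(i < n) x = x ^ n.
Proof. by rewrite big_const_ord; elim: n => //= n ->. Qed.

Lemma prodR_pair_if (I J : finType) (S : pred I) (H : I * J -> R) :
  \big[Rmult/R1]_(k : I * J) (if S k.1 then H k else 1)
  = \big[Rmult/R1]_(i : I) (if S i then \big[Rmult/R1]_(j : J) H (i, j) else 1).
Proof.
rewrite -big_mkcond -[RHS]big_mkcond /= pair_big_dep /=.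
by apply: eq_big => [[i j] | [i j]]; rewrite ?andbT.
Qed.

Section BernoulliMatrix.

Variables (n : nat) (p : R).
Hypothesis p01 : 0 <= p <= 1.

Lemma bern_weight_ge0 (B : bmat n) : 0 <= bern_weight p B.
Proof. by apply: prodR_ge0 => k _; case: (B k); lra. Qed.

Lemma bern_expect_prod (F : 'I_n * 'I_n -> bool -> R) :
  \big[Rplus/R0]_(B : bmat n) (bern_weight p B * \big[Rmult/R1]_k F k (B k))
  = \big[Rmult/R1]_k (p * F k true + (1 - p) * F k false).
Proof.
rewrite -(@sum_ffun_prodR _ (fun k b => (if b then p else 1 - p) * F k b)).
by apply: eq_bigr => B _; rewrite /bern_weight -big_split.
Qed.

Lemma bern_weight_sum1 : \big[Rplus/R0]_(B : bmat n) bern_weight p B = 1.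
Proof.
have := bern_expect_prod (fun _ _ => 1).
rewrite [RHS]big1 => [|k _]; last ring.
move=> sum1; apply: eq_trans sum1 => /=.
by apply: eq_bigr => B _; rewrite big1 // Rmult_1_r.
Qed.

Lemma bern_markov_compl (E : pred (bmat n)) (X : bmat n -> R) :
  (forall B, 0 <= X B) -> (forall B, ~~ E B -> 1 <= X B) ->
  1 - \big[Rplus/R0]_(B : bmat n) (bern_weight p B * X B) <= bern_prob p E.
Proof.
move=> X_ge0 X_ge1.
have -> : bern_prob p E = 1 - \big[Rplus/R0]_(B | ~~ E B) bern_weight p B.
  by rewrite /bern_prob -bern_weight_sum1 [in RHS](bigID E) Rplus_minus_r.
apply: Rplus_le_compat_l; apply: Ropp_le_contravar.
rewrite [Y in _ <= Y](bigID E) /= -[Y in Y <= _]Rplus_0_l; apply: Rplus_le_compat.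
  by apply: sumR_ge0 => B _; apply: Rmult_le_pos; [exact: bern_weight_ge0 | exact: X_ge0].
by apply: sumR_le => B /X_ge1; have := bern_weight_ge0 B; nra.
Qed.

Lemma bern_expect_rows (S : pred 'I_n) (c : R) (h : bool -> R) :
  \big[Rplus/R0]_(B : bmat n)
     (bern_weight p B *
      \big[Rmult/R1]_(i < n) (if S i then c * \big[Rmult/R1]_(j < n) h (B (i, j)) else 1))
  = \big[Rmult/R1]_(i < n) (if S i then c * (p * h true + (1 - p) * h false) ^ n else 1).
Proof.
have split_c (Y : 'I_n -> R) : \big[Rmult/R1]_(i < n) (if S i then c * Y i else 1)
    = \big[Rmult/R1]_(i < n) (if S i then c else 1)
      * \big[Rmult/R1]_(i < n) (if S i then Y i else 1).
  by rewrite -big_split; apply: eq_bigr => i _ /=; case: (S i); rewrite ?Rmult_1_r.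
rewrite split_c.
transitivity (\big[Rmult/R1]_(i < n) (if S i then c else 1) *
  \big[Rplus/R0]_(B : bmat n)
     (bern_weight p B * \big[Rmult/R1]_k (if S k.1 then h (B k) else 1))).
  rewrite big_distrr /=; apply: eq_bigr => B _.
  by rewrite split_c prodR_pair_if; apply: RmultCA.
rewrite (bern_expect_prod (fun k b => if S k.1 then h b else 1)); congr (_ * _).
rewrite (eq_bigr (fun k => if S k.1 then p * h true + (1 - p) * h false else 1)).
  by rewrite prodR_pair_if; apply: eq_bigr => i _; rewrite prodR_const_ord.
by move=> k _; case: (S k.1); ring.
Qed.

End BernoulliMatrix.

Definition heavy_threshold (n : nat) (p eps : R) : R := 21 * p * INR n + 2 * ln (/ eps).

(* Expanding the product shows this is the sum of W_S over all row sets S. *)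
Definition heavy_witness (n : nat) (p eps : R) (B : bmat n) : R :=
  exp (- (eps * INR n)) *
  \big[Rmult/R1]_(i < n)
     (1 + exp (- heavy_threshold n p eps) * exp (2 * INR (row_ones B i))).

Lemma heavy_witness_ge0 (n : nat) (p eps : R) (B : bmat n) : 0 <= heavy_witness n p eps B.
Proof.
apply: Rmult_le_pos; first exact/Rlt_le/exp_pos.
apply: prodR_ge0 => i _; have := exp_pos (- heavy_threshold n p eps).
have := exp_pos (2 * INR (row_ones B i)); nra.
Qed.

Lemma exp_row_ones (n : nat) (c : R) (B : bmat n) (i : 'I_n) :
  exp (c * INR (row_ones B i)) = \big[Rmult/R1]_(j < n) exp (c * INR (B (i, j))).
Proof. by rewrite /row_ones INR_sumn big_distrr /= exp_sumR. Qed.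

Lemma heavy_witness_ge1 (n : nat) (p eps : R) (B : bmat n) :
  ~~ good_event p eps B -> 1 <= heavy_witness n p eps B.
Proof.
rewrite /good_event; case: Rle_dec => // /Rnot_le_lt heavy_gt _.
apply: (@Rle_trans _ (exp (- (eps * INR n)) * exp (INR (heavy_ones p eps B)))).
  by rewrite -exp_plus -exp_0; apply: exp_le_exp; lra.
apply: Rmult_le_compat_l; first exact/Rlt_le/exp_pos.
rewrite /heavy_ones INR_sumn exp_sumR big_mkcond /=; apply: prodR_le => i _.
set T := heavy_threshold n p eps; set r := INR (row_ones B i).
have := Rmult_lt_0_compat _ _ (exp_pos (- T)) (exp_pos (2 * r)).
rewrite /heavy_row; case: Rlt_dec => /= [r_gt | _] prod_gt0; last lra.
suff : exp r <= exp (- T) * exp (2 * r) by have := exp_pos r; lra.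
by rewrite -exp_plus; apply: exp_le_exp; rewrite /T /r /heavy_threshold; lra.
Qed.

Lemma expect_heavy_witness (n : nat) (p eps : R) :
  \big[Rplus/R0]_(B : bmat n) (bern_weight p B * heavy_witness n p eps B)
  = exp (- (eps * INR n)) *
    (1 + exp (- heavy_threshold n p eps) * (p * exp 2 + (1 - p)) ^ n) ^ n.
Proof.
set c := exp (- heavy_threshold n p eps); set m := p * exp 2 + (1 - p).
have expand (B : bmat n) :
    \big[Rmult/R1]_(i < n) (1 + c * exp (2 * INR (row_ones B i)))
    = \big[Rplus/R0]_(S : {ffun 'I_n -> bool}) \big[Rmult/R1]_(i < n)
        (if S i then c * \big[Rmult/R1]_(j < n) exp (2 * INR (B (i, j))) else 1).
  rewrite (@sum_ffun_prodR _
    (fun i b => if b then c * \big[Rmult/R1]_(j < n) exp (2 * INR (B (i, j))) else 1)).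
  by apply: eq_bigr => i _; rewrite exp_row_ones Rplus_comm.
transitivity (exp (- (eps * INR n)) *
  \big[Rplus/R0]_(S : {ffun 'I_n -> bool}) \big[Rplus/R0]_(B : bmat n)
     (bern_weight p B * \big[Rmult/R1]_(i < n)
        (if S i then c * \big[Rmult/R1]_(j < n) exp (2 * INR (B (i, j))) else 1))).
  rewrite exchange_big [RHS]big_distrr /=; apply: eq_bigr => B _.
  by rewrite /heavy_witness expand RmultCA big_distrr.
rewrite (eq_bigr (fun S : {ffun 'I_n -> bool} =>
           \big[Rmult/R1]_(i < n) (if S i then c * m ^ n else 1))); last first.
  move=> S _; rewrite (bern_expect_rows _ _ S c (fun b : bool => exp (2 * INR b))).
  rewrite /m /= Rmult_0_r Rmult_1_r exp_0.
  by apply: eq_bigr => i _; rewrite Rmult_1_r.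
rewrite (@sum_ffun_prodR _ (fun _ b => if b then c * m ^ n else 1)).
by rewrite prodR_const_ord Rplus_comm.
Qed.

Lemma heavy_tail_factor_le (n : nat) (p eps : R) : 0 <= p <= 1 -> 0 < eps <= / 2 ->
  exp (- heavy_threshold n p eps) * (p * exp 2 + (1 - p)) ^ n <= eps / 2.
Proof.
move=> p01 eps_bd.
have e2_le : exp 2 <= 9.
  have -> : 2 = 1 + 1 by ring.
  by rewrite exp_plus; have := exp_le_3; have := exp_pos 1; nra.
have e2_ge : 1 <= exp 2 by rewrite -exp_0; apply: exp_le_exp; lra.
have mgf_le : (p * exp 2 + (1 - p)) ^ n <= exp (p * (exp 2 - 1) * INR n).
  have -> : p * exp 2 + (1 - p) = 1 + p * (exp 2 - 1) by ring.
  by apply: one_add_pow_le_exp; nra.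
apply: (@Rle_trans _ (exp (- heavy_threshold n p eps) * exp (p * (exp 2 - 1) * INR n))).
  by apply: Rmult_le_compat_l; [exact/Rlt_le/exp_pos | exact: mgf_le].
rewrite -exp_plus; apply: (@Rle_trans _ (exp (ln eps + ln eps))).
  apply: exp_le_exp; rewrite /heavy_threshold ln_Rinv; last lra.
  have : 0 <= p * INR n by have := pos_INR n; nra.
  nra.
rewrite exp_plus exp_ln; [nra | lra].
Qed.

Theorem mainTheorem14 (n : nat) (p eps : R) :
  (0 <= p <= 1)%R -> (0 < eps <= / 2)%R ->
  (1 - exp (- (eps * INR n / 2)) <= bern_prob p (@good_event n p eps))%R.
Proof.
move=> p01 eps_bd.
set a := exp (- heavy_threshold n p eps) * (p * exp 2 + (1 - p)) ^ n.
have a_le : a <= eps / 2 by exact: heavy_tail_factor_le.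
have a_ge0 : 0 <= a.
  apply: Rmult_le_pos; first exact/Rlt_le/exp_pos.
  by apply: pow_le; have := exp_pos 2; nra.
apply: Rle_trans (bern_markov_compl _ _ p01 _ _
  (heavy_witness_ge0 n p eps) (@heavy_witness_ge1 n p eps)).
rewrite expect_heavy_witness -/a.
apply: Rplus_le_compat_l; apply: Ropp_le_contravar.
apply: (@Rle_trans _ (exp (- (eps * INR n)) * exp (a * INR n))).
  by apply: Rmult_le_compat_l; [exact/Rlt_le/exp_pos | apply: one_add_pow_le_exp; lra].
rewrite -exp_plus; apply: exp_le_exp.
have := pos_INR n; nra.
Qed.
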